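(* Let $n=2$. (1) Every final admissible word $\omega$ has the form $\omega=\tau*j_1^\infty*\mathsf{ext}*j_2^k*j_2^\infty*\mathsf{ext}$ with $\tau\in[2]^*$, $\{j_1,j_2\}=\{1,2\}$ and $k\ge0$. For such $\omega$ put $N_\omega:=e_{j_2}^TM_\omega$ (a row vector). Then (2) $N_\omega\ge0$ entrywise, its entries are coprime, and $N_\omega=e_i^T$ is possible only for $i=j_2$. (3) Modulo the equivalence relation on words generated by replacing a subword $j\,j^\infty$ by $j^\infty$ ($j\in\{1,2\}$), a final admissible word $\omega$ is uniquely determined by the pair $(N_\omega,j_1)$. (4) Conversely, for every row vector $N\in\mathbb{Z}^{1\times2}_{\ge0}$ with coprime entries and every $j_1\in\{1,2\}$ with $N\ne e_{j_1}^T$, there is a final admissible $\omega$ of the form in (1) with this $j_1$ such that $N_\omega=N$.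
   Context: Here $n=2$, $e_1,e_2$ standard basis of $\mathbb{Z}^2$. The alphabet is $L=\{1,2,1^\infty,2^\infty,\mathsf{ext}\}$ (each $j^\infty$ and $\mathsf{ext}$ is a single letter); $\varepsilon$ is the empty word, $*$ concatenation, $j^k$ denotes $k$ copies of the letter $j$. A finite word $\omega$ over $L$ is admissible if: (i) whenever $j^\infty$ occurs, the subsequent part of $\omega$ contains neither $j$ nor $j^\infty$; (ii) the only letter allowed directly after $j^\infty$ is $\mathsf{ext}$; (iii) every $\mathsf{ext}$ occurs directly after some $j^\infty$. It is final if it contains the subword $j^\infty\mathsf{ext}$ for every $j\in\{1,2\}$. $X(\omega)$ is the set of $j$ such that $j^\infty\mathsf{ext}$ is a subword of $\omega$, $Y(\omega)=\{1,2\}\setminus X(\omega)$. Define recursively $\delta^i_\omega$: $\delta^i_\varepsilon=e_i$; $\delta^i_{\omega*j^\infty}=\delta^i_{\omega*\mathsf{ext}}=\delta^i_\omega$; $\delta^i_{\omega*j}=\delta^i_\omega$ if $i\in X(\omega)\cup\{j\}$ and $\delta^i_{\omega*j}=\delta^i_\omega-\delta^j_\omega$ if $i\in Y(\omega)\setminus\{j\}$. Let $M_\omega=(\delta^1_\omega\ \delta^2_\omega)^{-1}$, the inverse of the matrix with columns $\delta^1_\omega,\delta^2_\omega$. *)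

From HB Require Import structures.
From mathcomp Require Import all_boot all_order all_algebra.
From Stdlib Require Import Relations.
Set Implicit Arguments. Unset Strict Implicit. Unset Printing Implicit Defensive.
Import Order.TTheory GRing.Theory Num.Theory.
Local Open Scope ring_scope.

(* Letters over L = {1,2,1^oo,2^oo,ext}, with index j : 'I_2
   (ord 0 stands for 1, ord 1 stands for 2).
   Encoded as option ('I_2 + 'I_2) to inherit a finType structure. *)
Definition letter := option ('I_2 + 'I_2)%type.
Definition Lt (j : 'I_2) : letter := Some (inl j).
Definition Linf (j : 'I_2) : letter := Some (inr j).
Definition Lext : letter := None.

Definition word := seq letter.

Definition is_plain (a : letter) : bool :=
  if a is Some (inl _) then true else false.

Definition admissible (w : word) : Prop :=
  (forall (u v : word) (j : 'I_2), w = u ++ Linf j :: v ->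
       (Lt j \notin v) && (Linf j \notin v))
  /\ (forall (u v : word) (j : 'I_2) (x : letter), w = u ++ Linf j :: x :: v ->
       x = Lext)
  /\ (forall (u v : word), w = u ++ Lext :: v ->
       exists (u' : word) (j : 'I_2), u = rcons u' (Linf j)).

Definition inX (w : word) (j : 'I_2) : bool := infix [:: Linf j; Lext] w.

Definition final (w : word) : Prop := forall j : 'I_2, inX w j.

(* The matrix (delta^1_w delta^2_w) whose i-th column is delta^i_w. *)
Definition delta_step (pre : word) (D : 'M[int]_2) (a : letter) : 'M[int]_2 :=
  match a with
  | Some (inl j) =>
      \matrix_(r < 2, i < 2)
        (if inX pre i || (i == j) then D r i else D r i - D r j)
  | _ => D
  end.

Fixpoint deltaM_aux (pre : word) (D : 'M[int]_2) (w : word) : 'M[int]_2 :=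
  match w with
  | [::] => D
  | a :: w' => deltaM_aux (rcons pre a) (delta_step pre D a) w'
  end.

Definition deltaM (w : word) : 'M[int]_2 := deltaM_aux [::] 1%:M w.

Definition Mw (w : word) : 'M[int]_2 := invmx (deltaM w).

Definition Nw (w : word) (j2 : 'I_2) : 'rV[int]_2 := row j2 (Mw w).

Definition eT (i : 'I_2) : 'rV[int]_2 := delta_mx 0 i.

Definition normal_form (tau : word) (j1 j2 : 'I_2) (k : nat) : word :=
  tau ++ [:: Linf j1; Lext] ++ nseq k (Lt j2) ++ [:: Linf j2; Lext].

Definition red_step (w w' : word) : Prop :=
  exists (u v : word) (j : 'I_2),
    w = u ++ Lt j :: Linf j :: v /\ w' = u ++ Linf j :: v.

Definition word_equiv : word -> word -> Prop := clos_refl_sym_trans word red_step.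

From HB Require Import structures.
From mathcomp Require Import all_boot all_order all_algebra.
From Stdlib Require Import Relations.
From mathcomp Require Import zify.
Import Order.TTheory GRing.Theory Num.Theory.
Set Implicit Arguments. Unset Strict Implicit.
Local Open Scope ring_scope.

(* Reading an admissible final word from the left, the first
   non-plain letter must be some j1^oo (an ext needs a j^oo just before it)
   followed by ext; after it only j2 can occur until j2^oo ext, and after
   both blocks nothing can follow.

   Along the plain prefix tau each letter a multiplies the
   matrix (delta^1 delta^2) on the right by the transvection 1 - T_a, whose
   inverse is 1 + T_a; the tail j1^oo ext j2^k j2^oo ext changes nothing.
   Hence M_w is a product of the 1 + T_a, and its row j2 is the pair of
   naturals obtained from e_{j2} by the Stern-Brocot moves read along tau.
   These pairs are coprime with positive j2-coordinate; the moves are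
   injective except that the letter j1 fixes e_{j2}, which gives uniqueness
   up to absorbing trailing letters j1 (and j2^k) into the following j^oo;
   and Euclid's algorithm reaches every coprime pair, which gives existence. *)

Lemma ord2E (j : 'I_2) : j = ord0 \/ j = ord_max.
Proof. by case: j => [[|[|m]] Hm]; [left; apply: val_inj|right; apply: val_inj|]. Qed.

Lemma ord2_other (j1 j2 j : 'I_2) : j1 != j2 -> j = j1 \/ j = j2.
Proof. by case: (ord2E j1) (ord2E j2) (ord2E j) => -> [] -> [] ->; auto. Qed.

Lemma split_first (T : eqType) (x : T) (A C u v : seq T) :
  x \notin A -> u ++ x :: v = A ++ x :: C ->
  (u = A /\ v = C) \/ (exists u2, u = A ++ x :: u2 /\ u2 ++ x :: v = C).
Proof.
elim: A u => [|a A IH] [|y u] //=.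
- by move=> _ [->]; left.
- by move=> _ [-> <-]; right; exists u.
- by rewrite in_cons => /norP [/eqP ne _] [/ne].
rewrite in_cons => /norP [_ nA] [-> e].
case: (IH _ nA e) => [[-> ->]|[u2 [-> e2]]]; [left|right] => //.
by exists u2.
Qed.

Lemma cat_cons_unique (T : eqType) (x : T) (u v p q : seq T) :
  x \notin p -> x \notin q -> u ++ x :: v = p ++ x :: q -> u = p /\ v = q.
Proof.
move=> xp xq e; case: (split_first xp e) => // [[u2 [_ e2]]].
by move: xq; rewrite -e2 mem_cat mem_head orbT.
Qed.

Lemma Lt_eq (j k : 'I_2) : (Lt j == Lt k) = (j == k). Proof. by []. Qed.
Lemma Linf_eq (j k : 'I_2) : (Linf j == Linf k) = (j == k). Proof. by []. Qed.
Lemma Lt_Linf_eq (j k : 'I_2) : (Lt j == Linf k) = false. Proof. by []. Qed.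
Lemma Linf_Lt_eq (j k : 'I_2) : (Linf j == Lt k) = false. Proof. by []. Qed.
Lemma Lt_ext_eq (j : 'I_2) : (Lt j == Lext) = false. Proof. by []. Qed.
Lemma Linf_ext_eq (j : 'I_2) : (Linf j == Lext) = false. Proof. by []. Qed.
Definition letter_eqE :=
  (Lt_eq, Linf_eq, Lt_Linf_eq, Linf_Lt_eq, Lt_ext_eq, Linf_ext_eq).

Lemma letter_cases (x : letter) :
  x = Lext \/ exists j, x = Lt j \/ x = Linf j.
Proof. by case: x => [[j|j]|]; [right; exists j; left|right; exists j; right|left]. Qed.

Lemma plain_cases (x : letter) : is_plain x -> exists j, x = Lt j.
Proof. by case: x => [[j|j]|] // _; exists j. Qed.

Lemma plainP (tau : word) : all is_plain tau -> exists s, tau = map Lt s.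
Proof.
elim: tau => [|x tau IH] /=; first by exists [::].
case/andP => /plain_cases [j ->] /IH [s ->]; by exists (j :: s).
Qed.

Lemma map_Lt_plain (s : seq 'I_2) : all is_plain (map Lt s).
Proof. by rewrite all_map; apply/allP. Qed.

Definition is_inf (x : letter) : bool :=
  if x is Some (inr _) then true else false.

Lemma last_plain (x : letter) (s : word) :
  ~~ is_inf x -> all is_plain s -> ~~ is_inf (last x s).
Proof.
elim: s x => //= y s IH x _ /andP [py ps]; apply: IH => //.
by case: y py => [[]|].
Qed.

Lemma plain_notin_inf (s : word) (j : 'I_2) : all is_plain s -> Linf j \notin s.
Proof. by move=> Ps; apply/negP => /(allP Ps). Qed.

Lemma first_nonplain (w : word) : ~~ all is_plain w ->
  exists s x r, [/\ all is_plain s, ~~ is_plain x & w = s ++ x :: r].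
Proof.
elim: w => //= y w IH; case py: (is_plain y) => /= H; last first.
  by exists [::], y, w; rewrite py.
have [s [x [r [Ps Px ->]]]] := IH H.
by exists (y :: s), x, r; rewrite /= py.
Qed.

Section Admissible.

Variable w : word.
Hypothesis adm : admissible w.

Lemma adm_fresh u v j : w = u ++ Linf j :: v -> (Lt j \notin v) /\ (Linf j \notin v).
Proof. by case: adm => H _ e; apply/andP; apply: H e. Qed.

Lemma adm_ext_prev u v : w = u ++ Lext :: v -> is_inf (last Lext u).
Proof. by case: adm => _ [_ H] /H [u' [j ->]]; rewrite last_rcons. Qed.

Hypothesis fin : final w.

Lemma final_inf_in j : Linf j \in w.
Proof. by apply: (mem_infix (fin j)); rewrite mem_head. Qed.

(* (ii) together with finality: every j^oo is followed by ext. *)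
Lemma adm_inf_next u v j : w = u ++ Linf j :: v -> exists v', v = Lext :: v'.
Proof.
case: v => [|x v'] e; last by case: adm => _ [H _]; rewrite (H _ _ _ _ e); exists v'.
have /infixP [p [q e']] := fin j.
have [_ /negP []] := adm_fresh e'.
have /(congr1 (last Lext)) := etrans (esym e) e'.
by rewrite !last_cat /= => ->; apply: mem_last.
Qed.

Lemma adm_next_block p s x r :
  w = p ++ s ++ x :: r -> all is_plain s -> ~~ is_plain x ->
  ~~ is_inf (last Lext p) -> exists j r', x = Linf j /\ r = Lext :: r'.
Proof.
move=> e Ps Px Pp; case: (letter_cases x) => [xE|[j [xE|xE]]]; subst x => //.
  have /adm_ext_prev : w = (p ++ s) ++ Lext :: r by rewrite e catA.
  by rewrite last_cat (negbTE (last_plain Pp Ps)).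
have e' : w = (p ++ s) ++ Linf j :: r by rewrite e catA.
have [r' ->] := adm_inf_next e'.
by exists j, r'.
Qed.

Lemma adm_ends u j1 j2 z r : j1 != j2 -> Linf j1 \in u ->
  w <> u ++ Linf j2 :: Lext :: z :: r.
Proof.
move=> ne /splitPr [u1 u2] e.
have e1 : w = u1 ++ Linf j1 :: u2 ++ Linf j2 :: Lext :: z :: r.
  by rewrite e -catA.
have [n1 n1'] := adm_fresh e1.
have [n2 n2'] := adm_fresh e.
case: (letter_cases z) => [zE|[j [zE|zE]]]; subst z.
- have /adm_ext_prev : w = ((u1 ++ Linf j1 :: u2) ++ [:: Linf j2; Lext]) ++ Lext :: r.
    by rewrite e -!catA.
  by rewrite last_cat.
- case: (ord2_other j ne) => ?; subst j.
  + by move: n1; rewrite !(mem_cat, in_cons, eqxx, orbT).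
  + by move: n2; rewrite !(in_cons, eqxx, orbT).
- case: (ord2_other j ne) => ?; subst j.
  + by move: n1'; rewrite !(mem_cat, in_cons, eqxx, orbT).
  + by move: n2'; rewrite !(in_cons, eqxx, orbT).
Qed.

End Admissible.

Lemma final_admissible_shape (w : word) : admissible w -> final w ->
  exists tau j1 j2 k, all is_plain tau /\ j1 != j2 /\ w = normal_form tau j1 j2 k.
Proof.
move=> adm fin.
have : ~~ all is_plain w.
  by apply: contraL (final_inf_in fin ord0); apply: plain_notin_inf.
move/first_nonplain => [tau [x [r1 [Ptau Px e1]]]].
have [j1 [r2 [xE r1E]]] := adm_next_block adm fin (p := [::]) e1 Ptau Px isT.
subst x r1.
have [nLt1 nLinf1] := adm_fresh adm e1.
have : ~~ all is_plain r2.
  apply/negP => Pr2.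
  have j_eq (j : 'I_2) : j = j1.
    move: (final_inf_in fin j); rewrite e1 mem_cat (negbTE (plain_notin_inf j Ptau)).
    by rewrite !in_cons (negbTE (plain_notin_inf j Pr2)) !letter_eqE /= orbF => /eqP.
  by move: (j_eq ord0) (j_eq ord_max) => <- /(congr1 val).
move/first_nonplain => [a [y [r3 [Pa Py e2]]]].
have e3 : w = (tau ++ [:: Linf j1; Lext]) ++ a ++ y :: r3 by rewrite e1 e2 -catA.
have last_ext : ~~ is_inf (last Lext (tau ++ [:: Linf j1; Lext])) by rewrite last_cat.
have [j2 [r4 [yE r3E]]] := adm_next_block adm fin e3 Pa Py last_ext.
subst y r3.
have ne : j1 != j2.
  by apply: contraNneq nLinf1 => ->; rewrite e2 !(in_cons, mem_cat, eqxx, orbT).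
have aE : a = nseq (size a) (Lt j2).
  apply/all_pred1P/allP => x xa; have /plain_cases [j xE] := allP Pa x xa; subst x.
  case: (ord2_other j ne) => jE; subst j; last exact: eqxx.
  by move: nLt1; rewrite e2 in_cons mem_cat xa orbT.
have r4E : r4 = [::].
  case: r4 e3 {e2} => // z r e3.
  have e4 : w = ((tau ++ [:: Linf j1; Lext]) ++ a) ++ Linf j2 :: Lext :: z :: r.
    by rewrite e3 catA.
  have j1_in : Linf j1 \in (tau ++ [:: Linf j1; Lext]) ++ a.
    by rewrite !mem_cat mem_head orbT.
  by case: (adm_ends adm ne j1_in e4).
exists tau, j1, j2, (size a); do 2!split => //.
by rewrite e1 e2 r4E {1}aE.
Qed.

Section NormalForm.

Variables (tau : word) (j1 j2 : 'I_2) (k : nat).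
Hypotheses (Ptau : all is_plain tau) (ne : j1 != j2).

Let w := normal_form tau j1 j2 k.

Lemma normal_form_inf u v j : w = u ++ Linf j :: v ->
  (j = j1 /\ v = Lext :: nseq k (Lt j2) ++ [:: Linf j2; Lext])
  \/ (j = j2 /\ v = [:: Lext]).
Proof.
have n12 : Linf j1 \notin nseq k (Lt j2) ++ [:: Linf j2; Lext].
  by rewrite mem_cat mem_nseq !in_cons !letter_eqE (negbTE ne) andbF.
move=> e; case: (ord2_other j ne) => jE; subst j; [left|right]; split => //.
  by case: (cat_cons_unique (plain_notin_inf j1 Ptau) _ (esym e)); rewrite // in_cons.
have e' : u ++ Linf j2 :: v =
    (tau ++ Linf j1 :: Lext :: nseq k (Lt j2)) ++ Linf j2 :: [:: Lext].
  by rewrite -e /w /normal_form -!catA.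
case: (cat_cons_unique _ _ e') => //.
rewrite mem_cat (negbTE (plain_notin_inf j2 Ptau)) !in_cons mem_nseq !letter_eqE.
by rewrite eq_sym (negbTE ne) andbF.
Qed.

Lemma normal_form_admissible : admissible w.
Proof.
split; [|split].
- move=> u v j /normal_form_inf [[-> ->]|[-> ->]] //.
  by rewrite !(in_cons, mem_cat, mem_nseq, letter_eqE) (negbTE ne) !andbF.
- by move=> u v j x /normal_form_inf [[_ [->]]|[_ [->]]].
move=> u v e.
have e' : u ++ Lext :: v =
    (tau ++ [:: Linf j1]) ++ Lext :: (rcons (nseq k (Lt j2)) (Linf j2) ++ [:: Lext]).
  by rewrite -e /w /normal_form -cats1 -!catA.
have n1 : Lext \notin tau ++ [:: Linf j1].
  by rewrite mem_cat in_cons eq_sym letter_eqE orbF; apply/negP => /(allP Ptau).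
case: (split_first n1 e') => [[-> _]|[u2 [-> e2]]]; first by exists tau, j1; rewrite cats1.
have n2 : Lext \notin rcons (nseq k (Lt j2)) (Linf j2).
  by rewrite mem_rcons in_cons mem_nseq eq_sym letter_eqE andbF.
case: (cat_cons_unique n2 _ e2) => // -> _.
by exists (tau ++ Linf j1 :: Lext :: nseq k (Lt j2)), j2; rewrite rcons_cat -catA.
Qed.

Lemma normal_form_final : final w.
Proof.
move=> j; case: (ord2_other j ne) => ->; rewrite /inX /w /normal_form.
  exact: infix_infix.
by rewrite catA catA; apply: suffix_infix.
Qed.

End NormalForm.

(* Elementary transvection matrices, in any dimension: transv a has ones in
   row a off the diagonal, so  D *m transv a  adds column a of D to every
   other column.  Since transv a squares to 0, 1 - transv a and
   1 + transv a are mutually inverse. *)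
Section Transvection.

Variables (R : nzRingType) (n : nat).

Definition transv (a : 'I_n) : 'M[R]_n :=
  \matrix_(r, i) ((r == a) && (i != a))%:R.

Lemma mul_transv m (D : 'M[R]_(m, n)) a r i :
  (D *m transv a) r i = D r a *+ (i != a).
Proof.
rewrite !mxE (bigD1 a) //= big1 => [|k /negbTE ka]; last by rewrite !mxE ka mulr0.
by rewrite !mxE eqxx /= addr0 mulr_natr.
Qed.

Lemma transv_sq a : transv a *m transv a = 0.
Proof. by apply/matrixP => r i; rewrite mul_transv !mxE eqxx andbF mul0rn. Qed.

Lemma transv_inv a : (1%:M - transv a) *m (1%:M + transv a) = 1%:M.
Proof.
by rewrite mulmxDr !mulmxBl !mul1mx mulmx1 transv_sq subr0 addrNK.
Qed.

End Transvection.
Arguments transv {R n} a.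

Lemma plain_notX (pre : word) j : all is_plain pre -> inX pre j = false.
Proof.
move=> Ppre; apply/negbTE/negP => /mem_infix /(_ (Linf j) (mem_head _ _)).
by rewrite (negbTE (plain_notin_inf j Ppre)).
Qed.

Lemma delta_step_plain pre D a : all is_plain pre ->
  delta_step pre D (Lt a) = D *m (1%:M - transv a).
Proof.
move=> Ppre; apply/matrixP => r i.
rewrite mulmxBr mulmx1 mxE [RHS]mxE [in RHS]mxE mul_transv plain_notX //=.
by case: eqVneq => //= _; rewrite subr0.
Qed.

(* The product of the inverse transvections, in reverse reading order. *)
Definition Qmat (s : seq 'I_2) : 'M[int]_2 :=
  foldr (fun a Q => Q *m (1%:M + transv a)) 1%:M s.

Lemma deltaM_aux_plain pre D s : all is_plain pre ->
  deltaM_aux pre D (map Lt s) *m Qmat s = D.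
Proof.
elim: s pre D => [|a s IH] pre D Ppre; first by rewrite mulmx1.
have -> : deltaM_aux pre D (map Lt (a :: s)) =
    deltaM_aux (rcons pre (Lt a)) (D *m (1%:M - transv a)) (map Lt s).
  by rewrite -(delta_step_plain D a Ppre).
rewrite [Qmat _]/= mulmxA IH.
  by rewrite -mulmxA transv_inv mulmx1.
by rewrite all_rcons Ppre.
Qed.

Lemma deltaM_aux_cat pre D s t :
  deltaM_aux pre D (s ++ t) = deltaM_aux (pre ++ s) (deltaM_aux pre D s) t.
Proof.
by elim: s pre D => [|x s IH] pre D /=; rewrite ?cats0 // IH cat_rcons.
Qed.

(* After j1^oo ext, the letters j2, j2^oo, ext leave the matrix unchanged:
   column j1 is frozen and column j2 is never modified by a letter j2. *)
Lemma deltaM_aux_tail pre D (j1 j2 : 'I_2) k : j1 != j2 -> inX pre j1 ->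
  deltaM_aux pre D (nseq k (Lt j2) ++ [:: Linf j2; Lext]) = D.
Proof.
move=> ne; elim: k pre => [//|k IH] pre Xpre.
have step : delta_step pre D (Lt j2) = D.
  apply/matrixP => r i; rewrite /= !mxE.
  by case: (ord2_other i ne) => ->; rewrite ?Xpre ?eqxx ?orbT.
transitivity (deltaM_aux (rcons pre (Lt j2)) D (nseq k (Lt j2) ++ [:: Linf j2; Lext])).
  by rewrite -{2}step.
by apply: IH; rewrite /inX -cats1; apply: infix_catr.
Qed.

Lemma invmx_right (A B : 'M[int]_2) : A *m B = 1%:M -> invmx A = B.
Proof.
move=> AB; have [uA _] := mulmx1_unit AB.
by rewrite -[invmx A]mulmx1 -AB mulmxA mulVmx // mul1mx.
Qed.

Lemma Mw_normal_form s j1 j2 k : j1 != j2 ->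
  Mw (normal_form (map Lt s) j1 j2 k) = Qmat s.
Proof.
move=> ne; rewrite /Mw /deltaM /normal_form deltaM_aux_cat /=.
rewrite (deltaM_aux_tail _ _ ne); last first.
  by rewrite /inX -!cats1 -catA; apply: suffix_infix.
by apply: invmx_right; apply: deltaM_aux_plain.
Qed.

Definition coord (p : nat * nat) (c : 'I_2) : nat := if c == ord0 then p.1 else p.2.

Definition sb_step (a : 'I_2) (p : nat * nat) : nat * nat :=
  if a == ord0 then (p.1, p.1 + p.2)%N else (p.1 + p.2, p.2)%N.

Definition unit_pair (j : 'I_2) : nat * nat :=
  (nat_of_bool (j == ord0), nat_of_bool (j == ord_max)).

Definition sb (j : 'I_2) (s : seq 'I_2) : nat * nat := foldr sb_step (unit_pair j) s.

Lemma coord_sb_step a p c : coord (sb_step a p) c = (coord p c + coord p a * (c != a))%N.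
Proof.
rewrite /coord /sb_step; case: (ord2E a) => ->; case: (ord2E c) => -> /=; lia.
Qed.

Lemma row_Qmat j s c : row j (Qmat s) 0 c = (coord (sb j s) c)%:Z.
Proof.
elim: s c => [|a s IH] c.
  by rewrite !mxE /coord; case: (ord2E j) => ->; case: (ord2E c) => ->.
rewrite /= row_mul mulmxDr mulmx1 mxE mul_transv !IH coord_sb_step.
by case: (c != a); rewrite ?muln1 ?muln0 ?addn0 ?addr0 ?PoszD.
Qed.

Lemma Nw_normal_form s j1 j2 k c : j1 != j2 ->
  Nw (normal_form (map Lt s) j1 j2 k) j2 0 c = (coord (sb j2 s) c)%:Z.
Proof. by move=> ne; rewrite /Nw Mw_normal_form // row_Qmat. Qed.

Section SternBrocot.

Variable j2 : 'I_2.

(* The moves never decrease a coordinate and preserve coprimality, so the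
   pairs sb j2 s are coprime with a positive j2-coordinate. *)
Lemma sb_invariant s : coprime (sb j2 s).1 (sb j2 s).2 /\ (0 < coord (sb j2 s) j2)%N.
Proof.
elim: s => [|a s [cop pos]] /=; first by rewrite /coord; case: (ord2E j2) => ->.
split; last by apply: leq_trans pos _; rewrite coord_sb_step leq_addr.
move: cop; rewrite /sb_step /coprime; case: (sb j2 s) => c d /= cop.
by case: (a == ord0); rewrite /= ?gcdnDl // gcdnC gcdnDr gcdnC.
Qed.

Lemma unit_pair_pos : (0 < coord (unit_pair j2) j2)%N.
Proof. by rewrite /coord; case: (ord2E j2) => ->. Qed.

Lemma sb_step_inj a b p p' : (0 < coord p j2)%N -> (0 < coord p' j2)%N ->
  sb_step a p = sb_step b p' -> a = b /\ p = p'.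
Proof.
case: p p' => c d [c' d']; rewrite /sb_step /coord /=.
case: (ord2E j2) (ord2E a) (ord2E b) => -> [] -> [] -> /= pos pos' [e1 e2];
  (split; [done | congr pair; lia]) || (exfalso; lia).
Qed.

(* Euclid's algorithm: every coprime pair with positive j2-coordinate is
   reached. *)
Lemma sb_reach c d : coprime c d -> (0 < coord (c, d) j2)%N ->
  exists s, sb j2 s = (c, d).
Proof.
move: {2}(c + d)%N (leqnn (c + d)) => n; elim: n c d => [|n IH] c d bound cop pos.
  by move: cop; have [-> ->] : c = 0%N /\ d = 0%N by lia.
have unit_case : (c == 0)%N || (d == 0)%N -> exists s, sb j2 s = (c, d).
  move: cop pos; rewrite /coprime /coord => cop pos /orP [] /eqP c0; subst;
    move: cop; rewrite ?gcd0n ?gcdn0 => /eqP ->; exists [::]; move: pos;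
    by rewrite /= /unit_pair; case: (ord2E j2) => ->.
case: (posnP c) => [c0|cpos]; first by apply: unit_case; rewrite c0.
case: (posnP d) => [d0|dpos]; first by apply: unit_case; rewrite d0 orbT.
case: (ltngtP c d) => [lt|gt|eq].
- have [|||s e] := IH c (d - c)%N; first lia.
  + by move: cop; rewrite /coprime -{1}(subnKC (ltnW lt)) gcdnDl.
  + by move: pos; rewrite /coord; case: (_ == _) => /=; lia.
  exists (ord0 :: s); rewrite /= e /sb_step /=; congr pair; lia.
- have [|||s e] := IH (c - d)%N d; first lia.
  + by move: cop; rewrite /coprime -{1}(subnK (ltnW gt)) gcdnC gcdnDr gcdnC.
  + by move: pos; rewrite /coord; case: (_ == _) => /=; lia.
  exists (ord_max :: s); rewrite /= e /sb_step /=; congr pair; lia.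
subst d; move: cop pos; rewrite /coprime gcdnn => /eqP -> _.
by exists [:: j2]; rewrite /= /sb_step /unit_pair; case: (ord2E j2) => ->.
Qed.

Section TrailingLetters.

Variable j1 : 'I_2.
Hypothesis ne : j1 != j2.

(* The letter j1 fixes e_{j2}: trailing letters j1 are invisible. *)
Lemma sb_step_unit : sb_step j1 (unit_pair j2) = unit_pair j2.
Proof. by move: ne; rewrite /sb_step; case: (ord2E j1) (ord2E j2) => -> [] ->. Qed.

Lemma sb_unit s : sb j2 s = unit_pair j2 -> s = nseq (size s) j1.
Proof.
elim: s => //= a s IH e.
by have [-> /IH {1}->] :=
  sb_step_inj (proj2 (sb_invariant s)) unit_pair_pos (etrans e (esym sb_step_unit)).
Qed.

Lemma sb_inj s s' : sb j2 s = sb j2 s' ->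
  exists r m m', s = r ++ nseq m j1 /\ s' = r ++ nseq m' j1.
Proof.
elim: s s' => [|a s IH] [|b s'] e.
- by exists [::], 0%N, 0%N.
- by exists [::], 0%N, (size (b :: s')); split; last exact: sb_unit (esym e).
- by exists [::], (size (a :: s)), 0%N; split; first exact: sb_unit e.
have [-> /IH [r [m [m' [-> ->]]]]] :=
  sb_step_inj (proj2 (sb_invariant s)) (proj2 (sb_invariant s')) e.
by exists (b :: r), m, m'.
Qed.

End TrailingLetters.

End SternBrocot.

Lemma equiv_absorb u v j m :
  word_equiv (u ++ nseq m (Lt j) ++ Linf j :: v) (u ++ Linf j :: v).
Proof.
elim: m => [|m IH]; first exact: rst_refl.
apply: rst_trans IH; apply: rst_step.
exists (u ++ nseq m (Lt j)), v, j; split; last by rewrite -catA.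
by rewrite -addn1 nseqD -!catA.
Qed.

Lemma normal_form_equiv r j1 j2 m k :
  word_equiv (normal_form (map Lt (r ++ nseq m j1)) j1 j2 k)
             (normal_form (map Lt r) j1 j2 0).
Proof.
set t := map Lt (r ++ nseq m j1).
have e1 k' : normal_form t j1 j2 k' =
    (t ++ [:: Linf j1; Lext]) ++ nseq k' (Lt j2) ++ Linf j2 :: [:: Lext].
  by rewrite /normal_form -catA.
have e2 : normal_form t j1 j2 0 =
    map Lt r ++ nseq m (Lt j1) ++ Linf j1 :: [:: Lext; Linf j2; Lext].
  by rewrite /normal_form /t map_cat map_nseq -catA.
apply: rst_trans (_ : word_equiv _ (normal_form t j1 j2 0)) _.
  by rewrite !e1; apply: equiv_absorb.
by rewrite e2; apply: equiv_absorb.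
Qed.

(* Part (2): N_w is the pair sb j2 s, hence nonnegative, primitive, and a
   unit vector only in direction j2. *)
Lemma normal_form_Nw s j1 j2 k : j1 != j2 ->
  let N := Nw (normal_form (map Lt s) j1 j2 k) j2 in
  (forall c, 0 <= N 0 c) /\ coprimez (N 0 0) (N 0 1) /\ (forall i, N = eT i -> i = j2).
Proof.
move=> ne N; have [cop pos] := sb_invariant j2 s.
split=> [c|]; first by rewrite /N Nw_normal_form.
split; first by rewrite /N !Nw_normal_form.
move=> i /rowP /(_ j2); rewrite /N Nw_normal_form // /eT mxE /=.
by case: eqVneq => [//|_] [p0]; rewrite p0 in pos.
Qed.

Lemma normal_form_unique s s' j1 j2 k k' : j1 != j2 ->
  Nw (normal_form (map Lt s) j1 j2 k) j2 = Nw (normal_form (map Lt s') j1 j2 k') j2 ->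
  word_equiv (normal_form (map Lt s) j1 j2 k) (normal_form (map Lt s') j1 j2 k').
Proof.
move=> ne /rowP eN.
have sbE : sb j2 s = sb j2 s'.
  move: (eN ord0) (eN ord_max); rewrite !Nw_normal_form // /coord /=.
  by case: (sb j2 s) (sb j2 s') => c d [c' d'] [->] [->].
have [r [m [m' [-> ->]]]] := sb_inj ne sbE.
apply: rst_trans (normal_form_equiv _ _ _ _ _) _.
exact/rst_sym/normal_form_equiv.
Qed.

Lemma normal_form_exists (N : 'rV[int]_2) j1 :
  (forall c, 0 <= N 0 c) -> coprimez (N 0 0) (N 0 1) -> N != eT j1 ->
  exists tau j2 k, let w := normal_form tau j1 j2 k in
    all is_plain tau /\ j1 != j2 /\ admissible w /\ final w /\ Nw w j2 = N.
Proof.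
move=> Npos Ncop NeT; set j2 := rev_ord j1.
have ne : j1 != j2 by rewrite /j2; case: (ord2E j1) => ->.
pose p := (absz (N 0 0), absz (N 0 1)).
have NE c : N 0 c = (coord p c)%:Z.
  rewrite /coord; case: (ord2E c) => ->; rewrite /= gez0_abs ?Npos //.
  by congr (N 0 _); apply: val_inj.
have cop : coprime p.1 p.2 by rewrite -coprimezE.
have pos : (0 < coord p j2)%N.
  rewrite lt0n; apply: contra NeT => /eqP p0; apply/eqP/rowP => c.
  have p1 : coord p j1 = 1%N.
    move: cop p0; rewrite /coord /j2; case: (ord2E j1) => -> /= + p0;
    by rewrite p0 /coprime ?gcdn0 ?gcd0n => /eqP.
  rewrite NE /eT mxE /=; case: (ord2_other c ne) => ->; first by rewrite eqxx p1.
  by rewrite p0 eq_sym (negbTE ne).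
have [s sE] := sb_reach cop pos.
have Ps := map_Lt_plain s.
exists (map Lt s), j2, 0%N; split=> //; split=> //.
split; first exact: normal_form_admissible.
split; first exact: normal_form_final.
by apply/rowP => c; rewrite Nw_normal_form // sE NE.
Qed.

Theorem mainTheorem14 :
  (* (1) shape of final admissible words *)
  (forall w : word, admissible w -> final w ->
     exists (tau : word) (j1 j2 : 'I_2) (k : nat),
       all is_plain tau /\ j1 != j2 /\ w = normal_form tau j1 j2 k)
  /\
  (* (2) properties of N_w *)
  (forall (tau : word) (j1 j2 : 'I_2) (k : nat),
     let w := normal_form tau j1 j2 k in
     all is_plain tau -> j1 != j2 -> admissible w -> final w ->
       (forall c : 'I_2, 0 <= Nw w j2 0 c)
       /\ coprimez (Nw w j2 0 0) (Nw w j2 0 1)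
       /\ (forall i : 'I_2, Nw w j2 = eT i -> i = j2))
  /\
  (* (3) uniqueness modulo the equivalence generated by  j j^oo ~> j^oo *)
  (forall (tau tau' : word) (j1 j2 j2' : 'I_2) (k k' : nat),
     let w := normal_form tau j1 j2 k in
     let w' := normal_form tau' j1 j2' k' in
     all is_plain tau -> j1 != j2 -> admissible w -> final w ->
     all is_plain tau' -> j1 != j2' -> admissible w' -> final w' ->
     Nw w j2 = Nw w' j2' -> word_equiv w w')
  /\
  (* (4) existence *)
  (forall (N : 'rV[int]_2) (j1 : 'I_2),
     (forall c : 'I_2, 0 <= N 0 c) -> coprimez (N 0 0) (N 0 1) ->
     N != eT j1 ->
     exists (tau : word) (j2 : 'I_2) (k : nat),
       let w := normal_form tau j1 j2 k in
       all is_plain tau /\ j1 != j2 /\ admissible w /\ final w /\ Nw w j2 = N).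
Proof.
split; first exact: final_admissible_shape.
split.
  move=> tau j1 j2 k w /plainP [s tauE] ne _ _.
  by rewrite /w tauE; apply: normal_form_Nw.
split.
  move=> tau tau' j1 j2 j2' k k' w w' /plainP [s tauE] ne _ _ /plainP [s' tau'E] ne' _ _.
  have j2E : j2' = j2 by case: (ord2_other j2' ne) ne' => // ->; rewrite eqxx.
  by rewrite /w /w' tauE tau'E j2E; apply: normal_form_unique.
exact: normal_form_exists.
Qed.
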